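(* Let $\mathfrak L=\mathbb V\oplus\mathbb W$ be a color gLt-algebra admitting a quasi-multiplicative basis $\mathfrak B=\{e_i\}_{i\in I}$ of $\mathbb W\neq 0$. If $[i]\neq[h]$ for some $i,h\in I$, then $\langle\mathfrak J_{[i]},\mathfrak J_{[h]},\mathfrak L,\dots,\mathfrak L\rangle_\sigma=0$ for every $\sigma\in\mathbb S_n$.
   Context: Let $\mathbb F$ be a field, $\mathbb G$ an abelian group, $n\ge 2$, and $\epsilon:\mathbb G\times\mathbb G\to\mathbb F\setminus\{0\}$ a bicharacter ($\epsilon(k,g+h)=\epsilon(k,g)\epsilon(k,h)$, $\epsilon(g+h,k)=\epsilon(g,k)\epsilon(h,k)$, $\epsilon(g,h)\epsilon(h,g)=1$). A graded $n$-ary algebra is a $\mathbb G$-graded vector space $\mathfrak L=\bigoplus_{g\in\mathbb G}\mathfrak L_g$ with an $n$-linear map $\langle\cdot,\dots,\cdot\rangle:\mathfrak L^n\to\mathfrak L$ such that $\langle\mathfrak L_{g_1},\dots,\mathfrak L_{g_n}\rangle\subset\mathfrak L_{g_1+\dots+g_n}$. For $\sigma\in\mathbb S_n$ write $\langle x_1,\dots,x_n\rangle_\sigma:=\langle x_{\sigma(1)},\dots,x_{\sigma(n)}\rangle$; for subsets $A_1,\dots,A_n$, $\langle A_1,\dots,A_n\rangle_\sigma$ denotes the linear span of all $\langle x_1,\dots,x_n\rangle_\sigma$ with $x_r\in A_r$. A color gLt-algebra is a graded $n$-ary algebra satisfying, for each $k=1,\dots,n$ and fixed scalars $\alpha^{\sigma_1,\sigma_2}_{i,j,k}\in\mathbb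 F$, the color version (each term on the right multiplied by the product of values of $\epsilon$ on the degrees of the homogeneous arguments transposed in passing from the left-hand order to the order of that term) of the identity $\langle y_1,\dots,y_{k-1},\langle x_1,\dots,x_n\rangle,y_k,\dots,y_{n-1}\rangle=\sum_{1\le i,j\le n,\,\sigma_1\in\mathbb S_n,\,\sigma_2\in\mathbb S_{n-1}}\alpha^{\sigma_1,\sigma_2}_{i,j,k}\langle x_{\sigma_1(1)},\dots,x_{\sigma_1(i-1)},\langle y_{\sigma_2(1)},\dots,y_{\sigma_2(j-1)},x_{\sigma_1(i)},y_{\sigma_2(j)},\dots,y_{\sigma_2(n-1)}\rangle,x_{\sigma_1(i+1)},\dots,x_{\sigma_1(n)}\rangle$. $\mathfrak L$ admits a quasi-multiplicative basis if $\mathfrak L=\mathbb V\oplus\mathbb W$ with $\mathbb V$, $\mathbb W\ne0$ graded subspaces and $\mathfrak B=\{e_i\}_{i\in I}$ a basis of homogeneous elements of $\mathbb W$ such that: (1) for $i_1,\dots,i_n\in I$, either $\langle e_{i_1},\dots,e_{i_n}\rangle\in\mathbb Fe_j$ for some $j\in I$ or $\langle e_{i_1},\dots,e_{i_n}\rangle\in\mathbb V$; (2) for $0<k<n$, $i_1,\dots,i_k\in I$ and $\sigma\in\mathbb S_n$, $\langle e_{i_1},\dots,e_{i_k},\mathbb V,\dots,\mathbb V\rangle_\sigma\subset\mathbb Fe_{j_\sigma}$ for some $j_\sigma\in I$; (3) either $\langle\mathbb V,\dots,\mathbb V\rangle\subset\mathbb Fe_j$ for some $j\in I$ or $\langle\mathbb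 V,\dots,\mathbb V\rangle\subset\mathbb V$. Index maps: let $v$ be a symbol not in $I$, $\mathfrak I:=I\,\dot\cup\,\{v\}$; for each $j\in\mathfrak I$ take a new symbol $\overline j$, $\overline I:=\{\overline i:i\in I\}$, $\overline{\mathfrak I}:=\overline I\,\dot\cup\,\{\overline v\}$; set $\overline{(\overline j)}:=j$, $\overline J:=\{\overline j:j\in J\}$ for a set $J$ of symbols ($\overline\emptyset=\emptyset$). Put $u_j:=e_j$ for $j\in I$ and $u_v:=\mathbb V$. For $\sigma\in\mathbb S_n$ and $(j_1,\dots,j_n)\in\mathfrak I^n$ let $a_\sigma(j_1,\dots,j_n)=\{r\}$ if $r\in I$ and $0\ne\langle u_{j_1},\dots,u_{j_n}\rangle_\sigma\subset\mathbb Fe_r$, $=\{v\}$ if $0\ne\langle u_{j_1},\dots,u_{j_n}\rangle_\sigma\subset\mathbb V$, and $=\emptyset$ otherwise. For $j,j_2,\dots,j_n\in\mathfrak I$ let $b_\sigma(j,\overline j_2,\dots,\overline j_n):=\{x\in\mathfrak I: a_\sigma(x,j_2,\dots,j_n)=\{j\}\}$. Define $\mu$ on $(\mathfrak I\,\dot\cup\,\overline{\mathfrak I})\times(\mathfrak I^{n-1}\,\dot\cup\,\overline{\mathfrak I}^{n-1})$ with values subsets of $\mathfrak I$ by: $\mu(j,j_1,\dots,j_{n-1})=\bigcup_{\sigma\in\mathbb S_n}a_\sigma(j,j_1,\dots,j_{n-1})$ for $j,j_1,\dots,j_{n-1}\in\mathfrak I$; $\mu(j,\overline j_1,\dots,\overline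 j_{n-1})=\bigcup_{\sigma\in\mathbb S_n}b_\sigma(j,\overline j_1,\dots,\overline j_{n-1})$ for $j,j_1,\dots,j_{n-1}\in\mathfrak I$; $\mu(\overline j,j_1,\dots,j_{n-1})=\bigcup_{1\le k\le n-1,\ \sigma\in\mathbb S_n}b_\sigma(j_k,\overline j,\overline j_1,\dots,\overline j_{k-1},\overline j_{k+1},\dots,\overline j_{n-1})$ for $j,j_1,\dots,j_{n-1}\in\mathfrak I$; and $\mu(\overline j,\overline j_1,\dots,\overline j_{n-1})=\emptyset$. Define $\phi$ on pairs $(J,X)$ with $J\subset I\,\dot\cup\,\overline I$ and $X\in\mathfrak I^{n-1}\,\dot\cup\,\overline{\mathfrak I}^{n-1}$ by $\phi(\emptyset,X)=\emptyset$ and, for $J\ne\emptyset$, $\phi(J,X):=K\cup\overline K$ where $K:=\big(\bigcup_{j\in J}\mu(j,X)\big)\setminus\{v\}$. Connections: for distinct $i,j\in I$, $i$ is connected to $j$ if there exist $t\ge1$, $X_1,\dots,X_t\in\mathfrak I^{n-1}\,\dot\cup\,\overline{\mathfrak I}^{n-1}$ and $\widetilde i\in\{i,\overline i\}$ such that $\phi(\{\widetilde i\},X_1)\ne\emptyset$, …, $\phi(\cdots\phi(\{\widetilde i\},X_1)\cdots,X_{t-1})\ne\emptyset$, and $j\in\phi(\cdots\phi(\phi(\{\widetilde i\},X_1),X_2)\cdots,X_t)$; every $i$ is connected to itself. Being connected is an equivalence relation $\sim$ on $I$; $[i]$ denotes the class of $i$. Define $\mathbb V_{[i]}:=\big(\sum_{i_1,\dots,i_n\in[i]}\mathbb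 F\langle e_{i_1},\dots,e_{i_n}\rangle\big)\cap\mathbb V$, $\mathbb W_{[i]}:=\bigoplus_{j\in[i]}\mathbb Fe_j$, and $\mathfrak J_{[i]}:=\mathbb V_{[i]}\oplus\mathbb W_{[i]}$. *)

From HB Require Import structures.
From mathcomp Require Import all_boot all_order all_algebra all_fingroup.
Set Implicit Arguments. Unset Strict Implicit. Unset Printing Implicit Defensive.
Import GRing.Theory.
Local Open Scope ring_scope.

Section ColorGLt.
Variables (F : fieldType) (G : zmodType) (n : nat) (L : lmodType F).

Definition bicharacter (eps : G -> G -> F) : Prop :=
  (forall g h, eps g h != 0) /\
  (forall k g h, eps k (g + h) = eps k g * eps k h) /\
  (forall g h k, eps (g + h) k = eps g k * eps h k) /\
  (forall g h, eps g h * eps h g = 1).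

Definition subspace (P : L -> Prop) : Prop :=
  P 0 /\ forall (a : F) x y, P x -> P y -> P (a *: x + y).

Definition span (P : L -> Prop) (z : L) : Prop :=
  exists m (c : 'I_m -> F) (y : 'I_m -> L),
    (forall k, P (y k)) /\ z = \sum_(k < m) c k *: y k.

Variable Lg : G -> L -> Prop.

Definition graded_space : Prop :=
  (forall g, subspace (Lg g)) /\
  (forall x, exists (s : seq G) (f : G -> L),
      uniq s /\ (forall g, g \in s -> Lg g (f g)) /\ x = \sum_(g <- s) f g) /\
  (forall (s : seq G) (f : G -> L), uniq s -> (forall g, g \in s -> Lg g (f g)) ->
      \sum_(g <- s) f g = 0 -> forall g, g \in s -> f g = 0).

Definition graded_subspace (S : L -> Prop) : Prop :=
  subspace S /\
  forall x, S x -> exists (s : seq G) (f : G -> L),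
      uniq s /\ (forall g, g \in s -> Lg g (f g) /\ S (f g)) /\ x = \sum_(g <- s) f g.

Definition homogeneous (x : L) : Prop := exists g, Lg g x.

Variable mu : {ffun 'I_n -> L} -> L.

Definition upd (x : {ffun 'I_n -> L}) (r : 'I_n) (u : L) : {ffun 'I_n -> L} :=
  [ffun p => if p == r then u else x p].

Definition multilinear : Prop :=
  forall x r (a : F) u w, mu (upd x r (a *: u + w)) = a *: mu (upd x r u) + mu (upd x r w).

Definition graded_nary_algebra : Prop :=
  graded_space /\ multilinear /\
  forall (x : {ffun 'I_n -> L}) (d : 'I_n -> G),
    (forall r, Lg (d r) (x r)) -> Lg (\sum_(r < n) d r) (mu x).

Definition pnat N (s : {perm 'I_N}) (m : nat) : nat :=
  if (insub m : option 'I_N) is Some o then val (s o) else m.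

Variable eps : G -> G -> F.

(* Color sign of passing from the order Lft to the order Rgt of the (distinct)
   labelled arguments: product of eps (deg a) (deg b) over all pairs (a, b)
   with a before b in Lft but b before a in Rgt. *)
Definition color_sign (deg : bool * nat -> G) (Lft Rgt : seq (bool * nat)) : F :=
  \prod_(0 <= p < size Lft)
    \prod_(p.+1 <= q < size Lft |
             (index (nth (true, 0%N) Lft q) Rgt < index (nth (true, 0%N) Lft p) Rgt)%N)
      eps (deg (nth (true, 0%N) Lft p)) (deg (nth (true, 0%N) Lft q)).

(* labels: (true, m) = x_(m+1), (false, m) = y_(m+1) (0-based indices) *)
Definition lhs_order (kk : nat) : seq (bool * nat) :=
  [seq (false, m) | m <- iota 0 kk] ++ [seq (true, m) | m <- iota 0 n] ++
  [seq (false, m) | m <- iota kk (n.-1 - kk)%N].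

Definition rhs_order (i0 j0 : nat) (s1 : {perm 'I_n}) (s2 : {perm 'I_n.-1})
  : seq (bool * nat) :=
  [seq (true, pnat s1 m) | m <- iota 0 i0] ++
  [seq (false, pnat s2 m) | m <- iota 0 j0] ++
  (true, pnat s1 i0) :: [seq (false, pnat s2 m) | m <- iota j0 (n.-1 - j0)%N] ++
  [seq (true, pnat s1 m) | m <- iota i0.+1 (n - i0.+1)%N].

(* Color gLt identity, k = kk+1, i = i0+1, j = j0+1 (0-based); alpha i0 j0 kk s1 s2
   is the scalar alpha^{s1,s2}_{i,j,k}. *)
Definition color_gLt
  (alpha : 'I_n -> 'I_n -> 'I_n -> {perm 'I_n} -> {perm 'I_n.-1} -> F) : Prop :=
  forall (kk : 'I_n) (x y : nat -> L) (dx dy : nat -> G),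
    (forall m, (m < n)%N -> Lg (dx m) (x m)) ->
    (forall m, (m < n.-1)%N -> Lg (dy m) (y m)) ->
    let deg := fun o : bool * nat => if o.1 then dx o.2 else dy o.2 in
    mu [ffun p : 'I_n => if (p < kk)%N then y p
                         else if p == kk then mu [ffun q : 'I_n => x q]
                         else y p.-1] =
    \sum_(i0 < n) \sum_(j0 < n) \sum_(s1 : {perm 'I_n}) \sum_(s2 : {perm 'I_n.-1})
      (alpha i0 j0 kk s1 s2 * color_sign deg (lhs_order kk) (rhs_order i0 j0 s1 s2)) *:
      mu [ffun p : 'I_n =>
            if p == i0 then
              mu [ffun q : 'I_n => if (q < j0)%N then y (pnat s2 q)
                                   else if q == j0 then x (pnat s1 i0)
                                   else y (pnat s2 q.-1)]
            else x (pnat s1 p)].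

Variables (V W : L -> Prop) (I : Type) (e : I -> L).

Definition prodset (s : {perm 'I_n}) (A : 'I_n -> L -> Prop) : L -> Prop :=
  span (fun z => exists x : {ffun 'I_n -> L},
                   (forall r, A r (x r)) /\ z = mu [ffun r => x (s r)]).

Definition in_line (i : I) (z : L) : Prop := exists c : F, z = c *: e i.

Definition direct_sum_VW : Prop :=
  (forall x, exists v w, V v /\ W w /\ x = v + w) /\
  (forall x, V x -> W x -> x = 0).

Definition homogeneous_basis_of_W : Prop :=
  (forall i, homogeneous (e i)) /\
  (forall m (f : 'I_m -> I) (c : 'I_m -> F), injective f ->
      \sum_(k < m) c k *: e (f k) = 0 -> forall k, c k = 0) /\
  (forall w, W w <-> exists m (f : 'I_m -> I) (c : 'I_m -> F),
                       w = \sum_(k < m) c k *: e (f k)).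

Definition quasi_multiplicative_basis : Prop :=
  graded_subspace V /\ graded_subspace W /\
  (exists x, V x /\ x <> 0) /\ (exists x, W x /\ x <> 0) /\
  direct_sum_VW /\ homogeneous_basis_of_W /\
  (forall ix : 'I_n -> I,
      (exists j, in_line j (mu [ffun r => e (ix r)])) \/ V (mu [ffun r => e (ix r)])) /\
  (* (2) : the indices i_1..i_k are ix 0, ..., ix (k-1) *)
  (forall (k : nat) (ix : nat -> I) (s : {perm 'I_n}), (0 < k < n)%N ->
      exists j, forall z,
        prodset s (fun r => if (r < k)%N then (fun u => u = e (ix r)) else V) z ->
        in_line j z) /\
  ((exists j, forall z, prodset 1%g (fun _ => V) z -> in_line j z) \/
   (forall z, prodset 1%g (fun _ => V) z -> V z)).

(* Index maps. Symbols of \frak I = I \cup {v} are [option I] (None = v). *)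
Definition usym (j : option I) : L -> Prop :=
  match j with Some i => fun z => z = e i | None => V end.

(* a_s(j_1,...,j_n) as a relation: asig s js t <-> a_s(js) = {t};
   js m is j_(m+1) *)
Definition asig (s : {perm 'I_n}) (js : nat -> option I) (t : option I) : Prop :=
  let S := prodset s (fun r => usym (js r)) in
  (exists z, S z /\ z <> 0) /\
  match t with
  | Some r => forall z, S z -> in_line r z
  | None => forall z, S z -> V z
  end.

(* mu(b-symbol j, X) as a subset of \frak I.  b = true means barred j;
   X = (bX, js): bX = true means a barred (n-1)-tuple, js m is j_(m+1). *)
Definition musym (b : bool) (j : option I) (X : bool * (nat -> option I))
  (t : option I) : Prop :=
  match b, X.1 with
  | false, false => exists s, asig s (fun m => if m == 0%N then j else X.2 m.-1) t
  | false, true => exists s, asig s (fun m => if m == 0%N then t else X.2 m.-1) j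
  | true, false => exists k, (k < n.-1)%N /\ exists s,
      asig s (fun m => if m == 0%N then t else if m == 1%N then j
                       else X.2 (bump k m.-2)) (X.2 k)
  | true, true => False
  end.

(* subsets of I \cup \bar I: [bool * I -> Prop], (true, i) = \bar i *)
Definition phi (J : bool * I -> Prop) (X : bool * (nat -> option I)) : bool * I -> Prop :=
  fun y => exists j : bool * I, J j /\ musym j.1 (Some j.2) X (Some y.2).

Definition phi_iter (J : bool * I -> Prop) (Xs : seq (bool * (nat -> option I))) :=
  foldl phi J Xs.

Definition connected (i j : I) : Prop :=
  i = j \/
  (i <> j /\ exists (Xs : seq (bool * (nat -> option I))) (b : bool),
     (0 < size Xs)%N /\
     (forall s, (0 < s < size Xs)%N ->
        exists y, phi_iter (fun y => y = (b, i)) (take s Xs) y) /\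
     phi_iter (fun y => y = (b, i)) Xs (false, j)).

Definition cls (i : I) : I -> Prop := connected i.

Definition Vcls (i : I) (z : L) : Prop :=
  span (fun w => exists ix : nat -> I, (forall r, (r < n)%N -> cls i (ix r)) /\
                                       w = mu [ffun r : 'I_n => e (ix r)]) z /\ V z.

Definition Wcls (i : I) (z : L) : Prop := span (fun w => exists j, cls i j /\ w = e j) z.

Definition Jcls (i : I) (z : L) : Prop := exists v w, Vcls i v /\ Wcls i w /\ z = v + w.

End ColorGLt.

From Pilot Require Import Defs.
From HB Require Import structures.
From mathcomp Require Import all_boot all_order all_algebra all_fingroup.
From Stdlib Require Import FunctionalExtensionality PropExtensionality.
From Stdlib Require Import IndefiniteDescription Classical.
Set Implicit Arguments. Unset Strict Implicit. Unset Printing Implicit Defensive.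
Import GRing.Theory.
Local Open Scope ring_scope.

(* By multilinearity it suffices to kill <g_1, ..., g_n> when g_a is a basis
   vector e_j or a product of basis vectors indexed in [i], g_b is the same for
   [h], and the other arguments are homogeneous.  If g_a = e_j and g_b = e_k,
   expand the other arguments along V and the basis: a nonzero product lies in
   F e_t or in V; in the first case j ~ t ~ k, in the second the barred index
   map links k to j, contradicting [i] <> [h].  If g_a or g_b is a product, the
   gLt identity rewrites <g_1, ..., g_n> as a combination of terms each
   containing an inner product in which the other argument sits next to a
   single basis vector of that product, which reduces to the previous case. *)

Section Span.
Variables (F : fieldType) (L : lmodType F).
Implicit Types (P Q : L -> Prop).

Lemma span_gen P x : P x -> Defs.span P x.
Proof.
by move=> Px; exists 1%N, (fun _ => 1), (fun _ => x); rewrite big_ord1 scale1r.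
Qed.

Lemma span_ind P Q : subspace Q -> (forall x, P x -> Q x) ->
  forall z, Defs.span P z -> Q z.
Proof.
move=> [Q0 QD] PQ z [m [c [y [Py ->]]]].
elim: m c y Py => [|m IH] c y Py; first by rewrite big_ord0.
rewrite big_ord_recr /= addrC; apply: QD; first exact: PQ.
exact: IH (fun k => c (widen_ord (leqnSn m) k)) (fun k => y (widen_ord (leqnSn m) k)) _.
Qed.

Lemma span_subspace P : subspace (Defs.span P).
Proof.
split; first by exists 0%N, (fun _ => 0), (fun _ => 0); split; [case | rewrite big_ord0].
move=> a _ _ [m1 [c1 [y1 [P1 ->]]]] [m2 [c2 [y2 [P2 ->]]]].
exists (m1 + m2)%N, (fun k => match split k with inl k1 => a * c1 k1 | inr k2 => c2 k2 end),
  (fun k => match split k with inl k1 => y1 k1 | inr k2 => y2 k2 end); split.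
  by move=> k; case: (split k).
rewrite big_split_ord scaler_sumr; congr (_ + _); apply: eq_bigr => k _.
  by rewrite -[lshift _ _]/(unsplit (inl k)) unsplitK scalerA.
by rewrite -[rshift _ _]/(unsplit (inr k)) unsplitK.
Qed.

Lemma span_mono P Q : (forall x, P x -> Q x) -> forall z, Defs.span P z -> Defs.span Q z.
Proof. by move=> PQ; apply: span_ind (span_subspace Q) _ => x /PQ/span_gen. Qed.

Lemma span_add P x y : Defs.span P x -> Defs.span P y -> Defs.span P (x + y).
Proof. by move=> Px Py; have [_ SD] := span_subspace P; rewrite -[x]scale1r; apply: SD. Qed.

Lemma span_eq0 P : (forall x, P x -> x = 0) -> forall z, Defs.span P z -> z = 0.
Proof. by apply: span_ind; split=> // a x y -> ->; rewrite scaler0 addr0. Qed.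

Lemma in_line_subspace (I : Type) (e : I -> L) j : subspace (in_line e j).
Proof.
split; first by exists 0; rewrite scale0r.
by move=> a _ _ [c1 ->] [c2 ->]; exists (a * c1 + c2); rewrite scalerDl scalerA.
Qed.

End Span.

Section Multilinear.
Variables (F : fieldType) (L : lmodType F) (n : nat) (mu : {ffun 'I_n -> L} -> L).
Hypothesis mu_ml : multilinear mu.

Lemma upd_id (x : {ffun 'I_n -> L}) r : upd x r (x r) = x.
Proof. by apply/ffunP => p; rewrite ffunE; case: eqP => // ->. Qed.

Lemma mu_upd0 x r : mu (upd x r 0) = 0.
Proof.
have := mu_ml x r 1 0 0; rewrite !scale1r addr0 => /esym/eqP.
by rewrite -subr_eq0 addrK => /eqP.
Qed.

Lemma mu_upd_span_eq0 x r P : (forall u, P u -> mu (upd x r u) = 0) ->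
  forall w, Defs.span P w -> mu (upd x r w) = 0.
Proof.
apply: span_ind; split; first exact: mu_upd0.
by move=> a u w Hu Hw; rewrite mu_ml Hu Hw scaler0 addr0.
Qed.

Lemma mu_span_eq0 (A : 'I_n -> L -> Prop) :
  (forall f : {ffun 'I_n -> L}, (forall r, A r (f r)) -> mu f = 0) ->
  forall f : {ffun 'I_n -> L}, (forall r, Defs.span (A r) (f r)) -> mu f = 0.
Proof.
move=> HA.
suff K k (f : {ffun 'I_n -> L}) : (forall r : 'I_n, (k <= r)%N -> A r (f r)) ->
    (forall r, Defs.span (A r) (f r)) -> mu f = 0.
  by move=> f; apply: (K n) => r; rewrite leqNgt ltn_ord.
elim: k f => [|k IH] f Af spf; first by apply: HA => r; apply: Af.
have [kn|nk] := ltnP k n; last first.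
  by apply: IH => // r kr; have := leq_trans nk kr; rewrite leqNgt ltn_ord.
rewrite -(upd_id f (Ordinal kn)); apply: mu_upd_span_eq0 (spf _) => u Au.
apply: IH => r; rewrite ffunE; case: eqP => [-> //|/eqP nek].
- by move=> kr; apply: Af; rewrite ltn_neqAle kr andbT eq_sym.
- exact: span_gen.
- exact: spf.
Qed.

End Multilinear.

Lemma perm_pred_first n (P : pred 'I_n) :
  exists k (s : {perm 'I_n}), forall r, P (s r) = (r < k)%N.
Proof.
case: n P => [|n] P; first by exists 0%N, 1%g; case.
pose l := enum P ++ enum (predC P).
have size_l : size l = n.+1 by rewrite size_cat -!cardE cardC card_ord.
have uniq_l : uniq l.
  rewrite cat_uniq !enum_uniq andbT /=; apply/hasPn => x.
  by rewrite !mem_enum !inE.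
have inj_l : injective (fun r : 'I_n.+1 => nth ord0 l r).
  by move=> r1 r2 /eqP; rewrite nth_uniq ?size_l // => /eqP/val_inj.
exists (size (enum P)), (perm inj_l) => r; rewrite permE nth_cat.
case: ifP => [rP | /negbT]; first by have := mem_nth ord0 rP; rewrite mem_enum.
rewrite -leqNgt => rP; have : nth ord0 (enum (predC P)) (r - size (enum P)) \in enum (predC P).
  by rewrite mem_nth // ltn_subLR // -size_cat size_l.
by rewrite mem_enum inE => /negbTE.
Qed.

Lemma perm_two (T : finType) (a b c d : T) : a != b -> c != d ->
  exists s : {perm T}, s a = c /\ s b = d.
Proof.
move=> ab cd; set b' := tperm a c b.
have b'c : b' != c by rewrite /b' -[X in _ != X](tpermL a c) (inj_eq perm_inj) eq_sym.
exists (tperm a c * tperm b' d)%g; rewrite !permM tpermL tpermL; split => //.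
by rewrite tpermD // eq_sym.
Qed.

Lemma pnat_ord N (s : {perm 'I_N}) (o : 'I_N) : Defs.pnat s o = s o.
Proof. by rewrite /Defs.pnat valK. Qed.

Lemma if_unbump n (T : Type) (g : nat -> T) (c : T) (p k : 'I_n) :
  (if (p < k)%N then g p else if p == k then c else g p.-1) =
  (if p == k then c else g (unbump k p)).
Proof.
rewrite /unbump -[p == k]/(val p == val k).
by case: ltngtP => _; rewrite ?subn0 ?subn1.
Qed.

Section TwoSlots.
Variables (n : nat) (n_gt1 : (1 < n)%N).

Definition slot0 : 'I_n := Ordinal (ltnW n_gt1).
Definition slot1 : 'I_n := Ordinal n_gt1.

Lemma slot01 : slot0 != slot1. Proof. by []. Qed.

End TwoSlots.

Section SymbolProducts.
Variables (F : fieldType) (n : nat) (L : lmodType F) (mu : {ffun 'I_n -> L} -> L).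
Variables (V : L -> Prop) (I : Type) (e : I -> L).

Definition prod_span (A : 'I_n -> L -> Prop) : L -> Prop :=
  Defs.span (fun w => exists f : {ffun 'I_n -> L}, (forall r, A r (f r)) /\ w = mu f).

Definition sym_span (p : 'I_n -> option I) : L -> Prop :=
  prod_span (fun r => usym V e (p r)).

Definition target (t : option I) : L -> Prop := if t is Some r then in_line e r else V.

(* [lands (sym_span p) t] is the paper's a_1(p) = {t}, None standing for v. *)
Definition lands (S : L -> Prop) (t : option I) : Prop :=
  (exists z, S z /\ z <> 0) /\ (forall z, S z -> target t z).

Lemma prodsetE s A z : prodset mu s A z <-> prod_span (fun r => A (s r)) z.
Proof.
split; apply: span_mono => w.
  by case=> x [Ax ->]; exists [ffun r => x (s r)]; split=> // r; rewrite ffunE.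
case=> f [Af ->]; exists [ffun r => f ((s^-1)%g r)]; split.
  by move=> r; rewrite ffunE; have := Af ((s^-1)%g r); rewrite permKV.
by congr mu; apply/ffunP => r; rewrite !ffunE permK.
Qed.

Lemma asigE s js t : asig mu V e s js t <-> lands (sym_span (fun r => js (s r))) t.
Proof.
have E := @prodsetE s (fun r => usym V e (js r)).
rewrite /asig /lands /sym_span; split=> -[[z [Sz nz]] St].
  split; first by exists z; split=> //; apply/E.
  by case: t St => [r|] St y Sy; apply: St; apply/E.
split; first by exists z; split=> //; apply/E.
by case: t St => [r|] St y Sy; apply: St; apply/E.
Qed.

Lemma lands_sym_span_ext p p' t : (forall r, p r = p' r) ->
  lands (sym_span p) t -> lands (sym_span p') t.
Proof. by move=> E; have -> : p' = p by apply: functional_extensionality => r. Qed.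

Lemma asig_ext s js js' t : (forall m, (m < n)%N -> js m = js' m) ->
  asig mu V e s js t -> asig mu V e s js' t.
Proof. by move=> E; rewrite !asigE; apply: lands_sym_span_ext => r; apply: E. Qed.

Lemma lands_asig (o : 'I_n) (s : {perm 'I_n}) p t : lands (sym_span p) t ->
  asig mu V e s (fun m => p ((s^-1)%g (insubd o m))) t.
Proof. by rewrite asigE; apply: lands_sym_span_ext => r; rewrite valKd permK. Qed.

End SymbolProducts.

Section Connectivity.
Variables (F : fieldType) (n : nat) (L : lmodType F) (mu : {ffun 'I_n -> L} -> L).
Variables (V : L -> Prop) (I : Type) (e : I -> L).
Hypothesis n_gt1 : (1 < n)%N.

Local Notation o0 := (slot0 n_gt1).
Local Notation o1 := (slot1 n_gt1).
Local Notation conn := (connected mu V e).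
Local Notation phi_it := (phi_iter mu V e).
Local Notation sym_span := (sym_span mu V e).
Local Notation lands := (lands V e).

Definition chain (i j : I) (b : bool) (Xs : seq (bool * (nat -> option I))) : Prop :=
  (0 < size Xs)%N /\
  (forall s, (0 < s < size Xs)%N -> exists y, phi_it (fun y => y = (b, i)) (take s Xs) y) /\
  phi_it (fun y => y = (b, i)) Xs (false, j).

Lemma phi_iter_mono J J' Xs : (forall y, J y -> J' y) ->
  forall y, phi_it J Xs y -> phi_it J' Xs y.
Proof.
elim: Xs J J' => [|X Xs IH] J J' JJ //=; apply: IH => y [j [Jj Xj]].
by exists j; split => //; apply: JJ.
Qed.

Lemma phi_iter_flip J Xs b b' y : (0 < size Xs)%N ->
  phi_it J Xs (b, y) -> phi_it J Xs (b', y).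
Proof.
by case/lastP: Xs => [//|Xs X] _; rewrite /phi_iter !foldl_rcons => -[j [Jj Xj]]; exists j.
Qed.

Lemma phi_iter_cat J Xs Ys c y : phi_it J Xs c ->
  phi_it (fun y => y = c) Ys y -> phi_it J (Xs ++ Ys) y.
Proof. by move=> Jc; rewrite /phi_iter foldl_cat; apply: phi_iter_mono => _ ->. Qed.

Lemma chain_step c j X t : musym mu V e c (Some j) X (Some t) -> chain j t c [:: X].
Proof. by split=> //; split=> [[|[|s]] //|]; exists (c, j). Qed.

Lemma chain_cat a b c b1 b2 Xs Ys : chain a b b1 Xs -> chain b c b2 Ys ->
  chain a c b1 (Xs ++ Ys).
Proof.
move=> [sz1 [mid1 fin1]] [sz2 [mid2 fin2]].
have fin1' := phi_iter_flip b2 sz1 fin1.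
split; first by rewrite size_cat addn_gt0 sz1.
split; last exact: phi_iter_cat fin1' fin2.
move=> s /andP [s0 sXY]; rewrite take_cat; case: ltnP => sX.
  by apply: mid1; rewrite s0 sX.
have [->|sX0] := posnP (s - size Xs)%N; first by rewrite take0 cats0; exists (false, b).
have [|y Hy] := mid2 (s - size Xs)%N; last by exists y; apply: phi_iter_cat fin1' Hy.
by rewrite sX0 ltn_subLR // -size_cat.
Qed.

Lemma connected_chain i j b Xs : chain i j b Xs -> conn i j.
Proof.
move=> ch; have [->|ne] := classic (i = j); first by left.
by right; split => //; exists Xs, b.
Qed.

Lemma connected_step c j X t : musym mu V e c (Some j) X (Some t) -> conn j t.
Proof. by move/chain_step/connected_chain. Qed.

Lemma connected_trans a b c : conn a b -> conn b c -> conn a c.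
Proof.
case=> [-> //|[_ [Xs [b1 ch1]]]] [<-|[_ [Ys [b2 ch2]]]]; first exact: connected_chain ch1.
exact: connected_chain (chain_cat ch1 ch2).
Qed.

Lemma asig_swap01 A B (C : nat -> option I) s t :
  asig mu V e s (fun m => if m == 0%N then A else if m == 1%N then B else C m) t ->
  asig mu V e (s * tperm o0 o1)%g
    (fun m => if m == 0%N then B else if m == 1%N then A else C m) t.
Proof.
rewrite !asigE; apply: lands_sym_span_ext => r.
rewrite permM; case: tpermP => [-> | -> | /eqP ne0 /eqP ne1] //.
by have /negbTE -> : val (s r) != 0%N := ne0; have /negbTE -> : val (s r) != 1%N := ne1.
Qed.

Lemma musym_sym c j X t : musym mu V e c (Some j) X (Some t) ->
  exists c' X', musym mu V e c' (Some t) X' (Some j).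
Proof.
case: X => [[] Y]; case: c => //= H.
- by exists false, (false, Y).
- have [k [kn [s Hs]]] := H; exists true, (false, Y), k; split=> //.
  by exists (s * tperm o0 o1)%g; apply: asig_swap01.
- by exists false, (true, Y).
Qed.

Lemma connected_sym a b : conn a b -> conn b a.
Proof.
case=> [->|[_ [Xs [c [_ [_ fin]]]]]]; first by left.
suff K Ys y : phi_it (fun y => y = (c, a)) Ys y -> conn y.2 a by exact: K _ _ fin.
elim/last_ind: Ys y => [|Ys X IH] y; first by move=> ->; left.
rewrite /phi_iter foldl_rcons => -[j [Jj Xj]].
have [c' [X' Hrev]] := musym_sym Xj.
exact: connected_trans (connected_step Hrev) (IH _ Jj).
Qed.

Lemma lands_musym (s : {perm 'I_n}) p a j t : s a = o0 -> p a = Some j ->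
  lands (sym_span p) t ->
  musym mu V e false (Some j) (false, fun m => p ((s^-1)%g (insubd o0 m.+1))) t.
Proof.
move=> sa pa Hl; exists s; apply: asig_ext (lands_asig o0 s Hl) => -[|m] _ //=.
by rewrite -[0%N]/(val o0) valKd -sa permK.
Qed.

Lemma connected_of_lands p a b i h t : a != b -> p a = Some i -> p b = Some h ->
  lands (sym_span p) t -> conn i h.
Proof.
move=> ab pa pb Hl; have [s [sa sb]] := perm_two ab (slot01 n_gt1).
case: t Hl => [r|] Hl.
  have [s' [sb' _]] : exists s' : {perm 'I_n}, s' b = o0 /\ s' a = o1.
    by apply: perm_two (slot01 n_gt1); rewrite eq_sym.
  apply: connected_trans (connected_step (lands_musym sa pa Hl)) _.
  exact: connected_sym (connected_step (lands_musym sb' pb Hl)).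
(* The product lands in V: i belongs to mu(bar h, Y). *)
pose Y m := if m == 0%N then None else p ((s^-1)%g (insubd o0 m.+1)).
apply: connected_sym (@connected_step true h (false, Y) i _).
exists 0%N; split; first by case: n n_gt1 => [|[]].
exists s; apply: asig_ext (lands_asig o0 s Hl) => -[|[|m]] _ //=.
- by rewrite -[0%N]/(val o0) valKd -sa permK.
- by rewrite -[1%N]/(val o1) valKd -sb permK.
Qed.

Lemma cls_neq_not_connected i h x y : cls mu V e i <> cls mu V e h ->
  cls mu V e i x -> cls mu V e h y -> ~ conn x y.
Proof.
move=> ih ix hy xy; apply: ih; apply: functional_extensionality => w.
apply: propositional_extensionality; rewrite /cls; split => [iw|hw].
  apply: connected_trans hy (connected_trans (connected_sym xy) _).
  exact: connected_trans (connected_sym ix) iw.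
exact: connected_trans ix (connected_trans xy (connected_trans (connected_sym hy) hw)).
Qed.

End Connectivity.

Section GLtReduction.
Variables (F : fieldType) (G : zmodType) (n : nat) (L : lmodType F).
Variables (eps : G -> G -> F) (Lg : G -> L -> Prop) (mu : {ffun 'I_n -> L} -> L).
Variable alpha : 'I_n -> 'I_n -> 'I_n -> {perm 'I_n} -> {perm 'I_n.-1} -> F.
Hypotheses (mu_ml : multilinear mu) (gLt : color_gLt Lg mu eps alpha).

Lemma gLt_reduction (x : nat -> L) (u : L) (f : {ffun 'I_n -> L}) (a kk : 'I_n) :
  (forall m, homogeneous Lg (x m)) -> (forall r, homogeneous Lg (f r)) ->
  a != kk -> f kk = mu [ffun q : 'I_n => x q] -> f a = u ->
  (forall m (g : {ffun 'I_n -> L}) (a2 b2 : 'I_n), (m < n)%N -> a2 != b2 ->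
     g a2 = u -> g b2 = x m -> (forall r, homogeneous Lg (g r)) -> mu g = 0) ->
  mu f = 0.
Proof.
move=> xh fh akk fkk fa Hred.
have [dx Hdx] := functional_choice _ xh.
have [df Hdf] := functional_choice _ fh.
(* [y] lists the arguments of [f] off the slot [kk]; in every term of the gLt
   expansion, [u = y a'] shares an inner product with a single [x m]. *)
pose y m : L := f (insubd kk (bump kk m)).
have := gLt kk (y := y) (dy := fun m => df (insubd kk (bump kk m)))
  (fun m _ => Hdx m) (fun m _ => Hdf _); cbv zeta.
have -> : [ffun p : 'I_n => if (p < kk)%N then y p
            else if p == kk then mu [ffun q : 'I_n => x q] else y p.-1] = f.
  apply/ffunP => p; rewrite ffunE if_unbump; case: eqP => [-> //|/eqP pk].
  by rewrite /y unbumpK ?valKd // inE pk.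
move=> ->.
have [a' Ea _] := @unlift_some _ kk a ltac:(by rewrite eq_sym).
have ya : y a' = u by rewrite /y -[bump kk a']/(val (lift kk a')) valKd -Ea.
apply: big1 => i0 _; apply: big1 => j0 _; apply: big1 => s1 _; apply: big1 => s2 _.
set inner := mu [ffun q : 'I_n => if (q < j0)%N then _ else _].
have -> : inner = 0.
  apply: (Hred (Defs.pnat s1 i0) _ (lift j0 ((s2^-1)%g a')) j0).
  - by rewrite pnat_ord ltn_ord.
  - by rewrite lift_eqF.
  - have := if_unbump (fun m => y (Defs.pnat s2 m)) (x (Defs.pnat s1 i0))
      (lift j0 ((s2^-1)%g a')) j0.
    by cbv beta; rewrite ffunE => ->; rewrite lift_eqF bumpK pnat_ord permKV.
  - by rewrite ffunE ltnn eqxx.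
  - move=> r; rewrite ffunE; case: ifP => _; first exact: fh.
    by case: ifP => _; [exact: xh | exact: fh].
have -> : [ffun p : 'I_n => if p == i0 then 0 else x (Defs.pnat s1 p)] =
          upd [ffun p : 'I_n => x (Defs.pnat s1 p)] i0 0 by apply/ffunP => p; rewrite !ffunE.
by rewrite mu_upd0 // scaler0.
Qed.

End GLtReduction.

Section QuasiMultiplicativeBasis.
Variables (F : fieldType) (G : zmodType) (n : nat) (L : lmodType F).
Variables (eps : G -> G -> F) (Lg : G -> L -> Prop) (mu : {ffun 'I_n -> L} -> L).
Variable alpha : 'I_n -> 'I_n -> 'I_n -> {perm 'I_n} -> {perm 'I_n.-1} -> F.
Variables (V W : L -> Prop) (I : Type) (e : I -> L).
Hypotheses (n_gt1 : (1 < n)%N) (Hgr : graded_nary_algebra Lg mu).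
Hypotheses (gLt : color_gLt Lg mu eps alpha) (Hq : quasi_multiplicative_basis Lg mu V W e).

Local Notation o0 := (slot0 n_gt1).
Local Notation conn := (connected mu V e).
Local Notation sym_span := (sym_span mu V e).

Let mu_ml : multilinear mu := Hgr.2.1.

Definition line_or_V (S : L -> Prop) : Prop :=
  (exists j, forall z, S z -> in_line e j z) \/ (forall z, S z -> V z).

Lemma line_or_V_sub S S' : (forall z, S' z -> S z) -> line_or_V S -> line_or_V S'.
Proof.
by move=> S'S [[j Sj]|SV]; [left; exists j | right] => z /S'S; [apply: Sj | apply: SV].
Qed.

Lemma line_or_V_span1 w : (exists j, in_line e j w) \/ V w ->
  line_or_V (Defs.span (fun z => z = w)).
Proof.
have [[V_sub _] _] := Hq.
case=> [[j wj]|Vw]; [left; exists j | right].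
  by apply: span_ind (in_line_subspace e j) _ => _ ->.
by apply: span_ind V_sub _ => _ ->.
Qed.

Lemma sym_span_line_or_V p : line_or_V (sym_span p).
Proof.
have [_ [_ [_ [_ [_ [_ [qm1 [qm2 qm3]]]]]]]] := Hq.
have [k [sg Hsg]] := perm_pred_first (fun r => isSome (p r)).
have [nk|kn] := leqP n k.
  have [ix pix] : exists ix : 'I_n -> I, forall r, p r = Some (ix r).
    apply: (@functional_choice _ _ (fun r j => p r = Some j)) => r; have := Hsg ((sg^-1)%g r).
    by rewrite permKV (leq_trans (ltn_ord _) nk); case: (p r) => [j|] // _; exists j.
  apply: line_or_V_sub (line_or_V_span1 (qm1 ix)); apply: span_mono => _ [f [pf ->]].
  by congr mu; apply/ffunP => r; rewrite ffunE; have := pf r; rewrite pix.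
have [k0|k0] := posnP k.
  have pN r : p r = None.
    by have := Hsg ((sg^-1)%g r); rewrite permKV k0 ltn0; case: (p r).
  apply: line_or_V_sub qm3; apply: span_mono => _ [f [pf ->]].
  exists f; split; last by congr mu; apply/ffunP => r; rewrite ffunE perm1.
  by move=> r; have := pf r; rewrite pN.
have [d _] : exists d : I, True.
  have := Hsg (Ordinal (ltn_trans k0 kn)); rewrite /= k0.
  by case: (p _) => [d|] // _; exists d.
pose ix m := odflt d (p (sg (insubd o0 m))).
have [j Hj] := qm2 k ix (sg^-1)%g ltac:(by rewrite k0 kn).
left; exists j => z Sz; apply: Hj; move: z Sz; apply: span_mono => _ [f [pf ->]].
exists [ffun r => f (sg r)]; split; last by congr mu; apply/ffunP => r; rewrite !ffunE permKV.
move=> r; rewrite ffunE /ix valKd; have := pf (sg r); have := Hsg r.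
by case: (p (sg r)) => [i|] /=; case: (r < k)%N.
Qed.

Lemma sym_span_lands p z : sym_span p z -> z != 0 -> exists t, lands V e (sym_span p) t.
Proof.
move=> Sz /eqP nz; have [[j Sj]|SV] := sym_span_line_or_V p.
  by exists (Some j); split=> //; exists z.
by exists None; split=> //; exists z.
Qed.

Lemma span_symbols x : Defs.span (fun u => exists o, usym V e o u) x.
Proof.
have [_ [_ [_ [_ [[VW _] [[_ [_ spanW]] _]]]]]] := Hq.
have [v [w [Vv [Ww ->]]]] := VW x.
apply: span_add; first by apply: span_gen; exists None.
have [m [g [c ->]]] := (spanW w).1 Ww.
by exists m, c, (fun k => e (g k)); split=> // k; exists (Some (g k)).
Qed.

Lemma connected_of_mu_neq0 p (g : {ffun 'I_n -> L}) a b i h : a != b ->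
  p a = Some i -> p b = Some h -> (forall r, usym V e (p r) (g r)) -> mu g != 0 -> conn i h.
Proof.
move=> ab pa pb pg nz; have Sg : sym_span p (mu g) by apply: span_gen; exists g.
have [t Hl] := sym_span_lands Sg nz.
exact: (connected_of_lands n_gt1 ab pa pb Hl).
Qed.

Lemma mu_eq0_basis_basis i h : ~ conn i h ->
  forall (f : {ffun 'I_n -> L}) a b, a != b -> f a = e i -> f b = e h -> mu f = 0.
Proof.
move=> nc f a b ab fa fb.
pose A r := if r == a then (fun u => u = e i) else if r == b then (fun u => u = e h)
            else (fun u => exists o, usym V e o u).
apply: (mu_span_eq0 mu_ml (A := A)) => [g Ag|r]; last first.
  rewrite /A; case: eqP => [->|_]; first exact: span_gen.
  by case: eqP => [->|_]; [exact: span_gen | exact: span_symbols].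
have [q qg] : exists q, forall r, usym V e (q r) (g r).
  apply: (@functional_choice _ _ (fun r o => usym V e o (g r))) => r.
  have := Ag r; rewrite /A; case: eqP => _; first by exists (Some i).
  by case: eqP => _; first exists (Some h).
pose p r := if r == a then Some i else if r == b then Some h else q r.
have pg r : usym V e (p r) (g r).
  rewrite /p; case: eqP => [->|_]; first by have := Ag a; rewrite /A eqxx.
  case: eqP => [->|_]; last exact: qg.
  by have := Ag b; rewrite /A eq_sym (negbTE ab) eqxx.
have [//|nz] := eqVneq (mu g) 0.
have pa : p a = Some i by rewrite /p eqxx.
have pb : p b = Some h by rewrite /p eq_sym (negbTE ab) eqxx.
by case: (nc (connected_of_mu_neq0 ab pa pb pg nz)).
Qed.

Lemma homogeneous_basis i : homogeneous Lg (e i).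
Proof. by have [_ [_ [_ [_ [_ [[eh _] _]]]]]] := Hq. Qed.

Lemma homogeneous_prod (ix : nat -> I) : homogeneous Lg (mu [ffun q : 'I_n => e (ix q)]).
Proof.
have [d ed] := functional_choice _ homogeneous_basis.
by exists (\sum_(r < n) d (ix r)); apply: Hgr.2.2 => r; rewrite ffunE.
Qed.

Lemma mu_eq0_basis_prod i (hx : nat -> I) : (forall m, (m < n)%N -> ~ conn i (hx m)) ->
  forall (f : {ffun 'I_n -> L}) a b, a != b -> f a = e i ->
  f b = mu [ffun q : 'I_n => e (hx q)] -> (forall r, homogeneous Lg (f r)) -> mu f = 0.
Proof.
move=> nc f a b ab fa fb fh.
apply: (gLt_reduction mu_ml gLt (x := fun m => e (hx m)) _ fh ab fb fa) => [m|m g a2 b2 mn].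
  exact: homogeneous_basis.
by move=> ab2 ga gb _; apply: mu_eq0_basis_basis (nc m mn) _ _ _ ab2 ga gb.
Qed.

Lemma mu_eq0_prod_prod (ix hx : nat -> I) :
  (forall m m', (m < n)%N -> (m' < n)%N -> ~ conn (ix m) (hx m')) ->
  forall (f : {ffun 'I_n -> L}) a b, a != b -> f a = mu [ffun q : 'I_n => e (ix q)] ->
  f b = mu [ffun q : 'I_n => e (hx q)] -> (forall r, homogeneous Lg (f r)) -> mu f = 0.
Proof.
move=> nc f a b ab fa fb fh; rewrite eq_sym in ab.
apply: (gLt_reduction mu_ml gLt (x := fun m => e (ix m)) _ fh ab fa fb) => [m|m g a2 b2 mn].
  exact: homogeneous_basis.
move=> ab2 ga gb gh; rewrite eq_sym in ab2.
exact: mu_eq0_basis_prod (nc m ^~ mn) _ _ _ ab2 gb ga gh.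
Qed.

Definition Jgen (C : I -> Prop) (w : L) : Prop :=
  (exists2 j, C j & w = e j) \/
  (exists2 ix : nat -> I, (forall r, (r < n)%N -> C (ix r)) &
                          w = mu [ffun q : 'I_n => e (ix q)]).

Lemma homogeneous_Jgen C w : Jgen C w -> homogeneous Lg w.
Proof.
by case=> [[j _ ->]|[ix _ ->]]; [apply: homogeneous_basis | apply: homogeneous_prod].
Qed.

Lemma mu_eq0_Jgen C D : (forall x y, C x -> D y -> ~ conn x y) ->
  forall (f : {ffun 'I_n -> L}) a b, a != b -> Jgen C (f a) -> Jgen D (f b) ->
  (forall r, homogeneous Lg (f r)) -> mu f = 0.
Proof.
move=> nc f a b ab [[i Ci fa]|[ix Cix fa]] [[h Dh fb]|[hx Dhx fb]] fh.
- exact: mu_eq0_basis_basis (nc _ _ Ci Dh) _ _ _ ab fa fb.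
- exact: mu_eq0_basis_prod (fun m mn => nc _ _ Ci (Dhx m mn)) _ _ _ ab fa fb fh.
- rewrite eq_sym in ab; apply: mu_eq0_basis_prod _ _ _ _ ab fb fa fh => m mn hix.
  exact: nc (Cix m mn) Dh (connected_sym n_gt1 hix).
- apply: mu_eq0_prod_prod _ _ _ _ ab fa fb fh => m m' mn m'n.
  exact: nc (Cix m mn) (Dhx m' m'n).
Qed.

Lemma span_homogeneous x : Defs.span (homogeneous Lg) x.
Proof.
have [[_ [decomp _]] _] := Hgr; have [gs [xg [_ [xgh ->]]]] := decomp x.
exists (size gs), (fun _ => 1), (fun k => xg (nth 0 gs k)); split.
  by move=> k; exists (nth 0 gs k); apply: xgh; apply: mem_nth.
by rewrite (big_nth 0) big_mkord; apply: eq_bigr => k _; rewrite scale1r.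
Qed.

Lemma Jcls_span_Jgen i w : Jcls mu V e i w -> Defs.span (Jgen (cls mu V e i)) w.
Proof.
case=> v [w' [[Vv _] [Ww ->]]]; apply: span_add.
  by apply: span_mono Vv => u [ix [cix ->]]; right; exists ix.
by apply: span_mono Ww => u [j [cj ->]]; left; exists j.
Qed.

Lemma mu_Jgen_span_eq0 C D : (forall x y, C x -> D y -> ~ conn x y) ->
  forall (f : {ffun 'I_n -> L}) a b, a != b ->
  Defs.span (Jgen C) (f a) -> Defs.span (Jgen D) (f b) -> mu f = 0.
Proof.
move=> nc f a b ab fa fb.
pose A r := if r == a then Jgen C else if r == b then Jgen D else homogeneous Lg.
apply: (mu_span_eq0 mu_ml (A := A)) => [g Ag|r]; last first.
  by rewrite /A; case: eqP => [-> //|_]; case: eqP => [-> //|_]; apply: span_homogeneous.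
have ga : Jgen C (g a) by have := Ag a; rewrite /A eqxx.
have gb : Jgen D (g b) by have := Ag b; rewrite /A eq_sym (negbTE ab) eqxx.
apply: mu_eq0_Jgen nc _ _ _ ab ga gb _ => r; have := Ag r; rewrite /A.
by case: eqP => _; [apply: homogeneous_Jgen | case: eqP => _ //; apply: homogeneous_Jgen].
Qed.

End QuasiMultiplicativeBasis.

Theorem lemma3p11 (F : fieldType) (G : zmodType) (n : nat) (L : lmodType F)
  (eps : G -> G -> F) (Lg : G -> L -> Prop) (mu : {ffun 'I_n -> L} -> L)
  (alpha : 'I_n -> 'I_n -> 'I_n -> {perm 'I_n} -> {perm 'I_n.-1} -> F)
  (V W : L -> Prop) (I : Type) (e : I -> L) :
  (2 <= n)%N ->
  bicharacter eps ->
  graded_nary_algebra Lg mu ->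
  color_gLt Lg mu eps alpha ->
  quasi_multiplicative_basis Lg mu V W e ->
  forall i h : I, cls mu V e i <> cls mu V e h ->
  forall (s : {perm 'I_n}) (z : L),
    prodset mu s (fun r => if val r == 0%N then Jcls mu V e i
                           else if val r == 1%N then Jcls mu V e h
                           else (fun _ => True)) z ->
    z = 0.
Proof.
move=> n_gt1 _ Hgr gLt Hq i h ih s z; apply: span_eq0 => _ [x [Jx ->]].
have nc := cls_neq_not_connected n_gt1 ih.
apply: (mu_Jgen_span_eq0 n_gt1 Hgr gLt Hq nc
  (a := (s^-1)%g (slot0 n_gt1)) (b := (s^-1)%g (slot1 n_gt1))).
- by rewrite (inj_eq perm_inj) slot01.
- by rewrite ffunE permKV; exact: Jcls_span_Jgen (Jx (slot0 n_gt1)).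
- by rewrite ffunE permKV; exact: Jcls_span_Jgen (Jx (slot1 n_gt1)).
Qed.
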